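(* Fix a prime $q\ge3$. Let $T_1,T_2,T_3\subseteq\mathbb{F}_q$ be arbitrary sets of size $\ell>0$, and let $X_1,X_2$ be independent with $X_1$ uniform on $T_1$ and $X_2$ uniform on $T_2$. Then $$\Pr[X_1+X_2\in T_3]\le\begin{cases}\frac34+\frac{1}{4\ell^2}+\frac{\max(0,3\ell-2q-1)\cdot(3\ell-2q+1)}{4\ell^2}, & \ell\text{ odd},\\ \frac34+\frac{\max(0,3\ell-2q)^2}{4\ell^2}, & \ell\text{ even},\end{cases}$$ and this bound is tight for all $\ell$ (i.e., for every $\ell$ there exist such $T_1,T_2,T_3$ attaining it). In particular: (1) if $\ell\le 2q/3$, then $\Pr[X_1+X_2\in T_3]\le\frac34+\frac{1}{4\ell^2}$ when $\ell$ is odd and $\le\frac34$ when $\ell$ is even; (2) if $2q/3<\ell\le q-1$, then $\Pr[X_1+X_2\in T_3]\le\frac{q^2-3\ell(q-\ell)}{\ell^2}$. *)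

From mathcomp Require Import all_boot all_order all_algebra.
Set Implicit Arguments. Unset Strict Implicit. Unset Printing Implicit Defensive.
Import Order.TTheory GRing.Theory Num.Theory.
Local Open Scope ring_scope.

Definition prob_sum_in (q : nat) (T1 T2 T3 : {set 'F_q}) : rat :=
  (#|[set p : 'F_q * 'F_q | [&& p.1 \in T1, p.2 \in T2 & p.1 + p.2 \in T3]]|)%:R
  / (#|T1| * #|T2|)%:R.

Definition sum_bound (q l : nat) : rat :=
  let a : rat := 3 * l%:R - 2 * q%:R in
  if odd l then
    3 / 4 + 1 / (4 * l%:R ^+ 2) + Num.max 0 (a - 1) * (a + 1) / (4 * l%:R ^+ 2)
  else
    3 / 4 + (Num.max 0 a) ^+ 2 / (4 * l%:R ^+ 2).

From mathcomp Require Import all_boot all_order all_algebra.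
From mathcomp Require Import zify ring lra.
Set Implicit Arguments. Unset Strict Implicit. Unset Printing Implicit Defensive.
Import Order.TTheory GRing.Theory Num.Theory.

(* Let r(x) be the number of ways to write x = a + b with a in T1 and b in T2, and N the
   number of pairs with a + b in T3.  For every k, an x in T3 has r(x) + min(k, r(x)) <= r(x) + k
   and any other x has min(k, r(x)) <= r(x), so N + sum_x min(k, r(x)) <= l^2 + k l.  Pollard's
   theorem sum_x min(k, r(x)) >= k min(q, 2l - k), proved by induction on |T2| with Dyson's
   e-transform, then gives N <= l^2 - k (l - k) whenever 2l - k <= q.  The best admissible k is
   max(l/2, 2l - q).  The bound is attained by intervals T1 = T2 = [0, l), T3 = [l/2, l/2 + l)
   when 3l <= 2q, and by the complements of intervals of length q - l otherwise. *)

Lemma card_sum_in (T : finType) (A : {set T}) : #|A| = \sum_x (x \in A).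
Proof. by rewrite -sum1_card big_mkcond; apply: eq_bigr => x _; case: (x \in A). Qed.

Section SumsetCounting.
Variable G : finZmodType.
Implicit Types (A B C : {set G}) (x c e : G) (F : G -> nat).

Lemma sum_addr_shift c F : \sum_x F (x + c)%R = \sum_x F x.
Proof. by rewrite [RHS](reindex_inj (addIr c)). Qed.

Lemma sum_subr_reflect c F : \sum_x F (c - x)%R = \sum_x F x.
Proof.
have subr_inj : injective (fun x => c - x)%R by move=> x y /addrI /oppr_inj.
by rewrite [RHS](reindex_inj subr_inj).
Qed.

Definition nrep A B x : nat := \sum_a ((a \in A) && (x - a \in B))%R.

Definition trunc_rep k A B : nat := \sum_x minn k (nrep A B x).

Definition nsum_in A B C : nat := \sum_a \sum_b [&& a \in A, b \in B & (a + b)%R \in C].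

Lemma nrep_le_card A B x : nrep A B x <= #|B|.
Proof.
rewrite card_sum_in -[X in _ <= X](sum_subr_reflect x); apply: leq_sum => a _.
by case: (a \in A).
Qed.

Lemma sum_nrep A B : \sum_x nrep A B x = #|A| * #|B|.
Proof.
rewrite exchange_big card_sum_in big_distrl /=; apply: eq_bigr => a _.
case: (a \in A); last by rewrite mul0n big1.
by rewrite mul1n card_sum_in -[RHS](sum_addr_shift (- a)%R).
Qed.

Lemma nsum_inE A B C : nsum_in A B C = \sum_x (x \in C) * nrep A B x.
Proof.
under eq_bigr do rewrite big_distrr /=.
rewrite exchange_big /=; apply: eq_bigr => a _.
rewrite -[RHS](sum_addr_shift a); apply: eq_bigr => b _.
rewrite addrK (addrC b).
by case: (a \in A); case: (b \in B); case: (_ \in C).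
Qed.

Lemma card_pairs_sum_in A B C :
  #|[set p : G * G | [&& p.1 \in A, p.2 \in B & (p.1 + p.2)%R \in C]]| = nsum_in A B C.
Proof. by rewrite card_sum_in /nsum_in pair_bigA; apply: eq_bigr => p _; rewrite inE. Qed.

Lemma nsum_in_setCl A B C : nsum_in A B C + nsum_in (~: A) B C = #|B| * #|C|.
Proof.
rewrite /nsum_in [X in X + _]exchange_big [X in _ + X]exchange_big -big_split /=.
rewrite !card_sum_in big_distrl /=; apply: eq_bigr => b _.
rewrite -big_split big_distrr /= -[LHS](sum_addr_shift (- b)%R).
apply: eq_bigr => a _; rewrite inE addrNK.
by case: (a - b \in A)%R; case: (b \in B); case: (_ \in C).
Qed.

Lemma nsum_in_setCm A B C : nsum_in A B C + nsum_in A (~: B) C = #|A| * #|C|.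
Proof.
rewrite /nsum_in -big_split /= !card_sum_in big_distrl /=; apply: eq_bigr => a _.
rewrite -big_split big_distrr /= -[LHS](sum_addr_shift (- a)%R).
apply: eq_bigr => b _; rewrite inE (addrC a) addrNK.
by case: (a \in A); case: (b - a \in B)%R; case: (_ \in C).
Qed.

Lemma nsum_in_setCr A B C : nsum_in A B C + nsum_in A B (~: C) = #|A| * #|B|.
Proof.
rewrite /nsum_in -big_split !card_sum_in big_distrl /=; apply: eq_bigr => a _.
rewrite -big_split big_distrr /=; apply: eq_bigr => b _.
by rewrite inE; case: (a \in A); case: (b \in B); case: (_ \in C).
Qed.

Lemma nsum_in_trunc_rep k A B C :
  nsum_in A B C + trunc_rep k A B <= #|A| * #|B| + k * #|C|.
Proof.
rewrite nsum_inE /trunc_rep -sum_nrep card_sum_in big_distrr -!big_split /=.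
by apply: leq_sum => x _; case: (x \in C) => /=; lia.
Qed.

(* Dyson's e-transform (A u (B + e), B n (A - e)) and the residual pair
   (A \ (B + e), B \ (A - e)), which carries the representations it loses. *)
Definition etransA e A B := A :|: [set y | (y - e)%R \in B].
Definition etransB e A B := [set y in B | (y + e)%R \in A].
Definition eresA e A B := [set y in A | (y - e)%R \notin B].
Definition eresB e A B := [set y in B | (y + e)%R \notin A].

Lemma nrep_etrans e A B x :
  nrep A B x = nrep (etransA e A B) (etransB e A B) x + nrep (eresA e A B) (eresB e A B) x.
Proof.
pose tally (P : G -> bool) := \sum_a P a.
pose inA a := a \in A; pose inB a := (x - a)%R \in B.
pose inBe a := (a - e)%R \in B; pose inAe a := (x - a + e)%R \in A.
(* a |-> x + e - a matches the representations the residual pair misses with those the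
   transform gains. *)
have reflect_e : tally [pred a | [&& inA a, inBe a, inB a & ~~ inAe a]]
               = tally [pred a | [&& ~~ inA a, inBe a, inB a & inAe a]].
  rewrite /tally -(sum_subr_reflect (x + e)%R); apply: eq_bigr => a _.
  rewrite /inA /inB /inBe /inAe /=.
  have -> : (x + e - a - e = x - a)%R by rewrite addrAC addrK.
  have -> : (x - (x + e - a) = a - e)%R by rewrite opprB addrCA opprD addNKr.
  rewrite addrAC subrK.
  by case: (a \in A); case: (_ \in B); case: (_ \in B); case: (_ \in A).
have -> : nrep A B x = tally [pred a | [&& inA a, inB a & inAe a]]
    + tally [pred a | [&& inA a, ~~ inBe a, inB a & ~~ inAe a]]
    + tally [pred a | [&& inA a, inBe a, inB a & ~~ inAe a]].
  rewrite /tally -!big_split /=; apply: eq_bigr => a _; rewrite /inA /inB /inBe /inAe.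
  by case: (a \in A); case: (_ \in B); case: (_ \in B); case: (_ \in A).
have -> : nrep (etransA e A B) (etransB e A B) x = tally [pred a | [&& inA a, inB a & inAe a]]
    + tally [pred a | [&& ~~ inA a, inBe a, inB a & inAe a]].
  rewrite /tally -!big_split /=; apply: eq_bigr => a _.
  rewrite /inA /inB /inBe /inAe /etransA /etransB !inE.
  by case: (a \in A); case: (_ \in B); case: (_ \in B); case: (_ \in A).
have -> : nrep (eresA e A B) (eresB e A B) x
    = tally [pred a | [&& inA a, ~~ inBe a, inB a & ~~ inAe a]].
  apply: eq_bigr => a _; rewrite /inA /inB /inBe /inAe /eresA /eresB !inE.
  by case: (a \in A); case: (_ \in B); case: (_ \in B); case: (_ \in A).
by rewrite reflect_e; lia.
Qed.

Lemma card_etrans e A B : #|etransA e A B| + #|etransB e A B| = #|A| + #|B|.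
Proof.
rewrite !card_sum_in -[X in _ + X = _](sum_addr_shift (- e)%R).
rewrite -[X in _ = _ + X](sum_addr_shift (- e)%R) -!big_split /=.
apply: eq_bigr => a _; rewrite !inE subrK.
by case: (a \in A); case: (_ \in B).
Qed.

Lemma card_eresA e A B : #|eresA e A B| + #|etransB e A B| = #|A|.
Proof.
rewrite !card_sum_in -[X in _ + X = _](sum_addr_shift (- e)%R) -big_split /=.
apply: eq_bigr => a _; rewrite !inE subrK.
by case: (a \in A); case: (_ \in B).
Qed.

Lemma card_eresB e A B : #|eresB e A B| + #|etransB e A B| = #|B|.
Proof.
rewrite !card_sum_in -big_split /=; apply: eq_bigr => b _; rewrite !inE.
by case: (b \in B); case: (_ \in A).
Qed.

Lemma trunc_rep_etrans_le k e A B :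
  trunc_rep k (etransA e A B) (etransB e A B) <= trunc_rep k A B.
Proof.
by apply: leq_sum => x _; rewrite [X in _ <= minn _ X](nrep_etrans e); lia.
Qed.

Lemma trunc_rep_etrans_split k e A B : #|etransB e A B| <= k ->
  #|etransB e A B| * #|etransA e A B| + trunc_rep (k - #|etransB e A B|) (eresA e A B) (eresB e A B)
  <= trunc_rep k A B.
Proof.
move=> le_m_k; rewrite mulnC -sum_nrep -big_split /=; apply: leq_sum => x _.
have := nrep_le_card (etransA e A B) (etransB e A B) x.
rewrite [X in _ <= minn _ X](nrep_etrans e).
by move: le_m_k; move: #|etransB e A B| (nrep _ _ x) (nrep (eresA e A B) _ x) => m r r0; lia.
Qed.

(* Every x in A + b0 then has all of B among its summands. *)
Lemma trunc_rep_diff_closed k A B : k <= #|B| ->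
  (forall a b b', a \in A -> b \in B -> b' \in B -> (a + (b' - b))%R \in A) ->
  k * #|A| <= trunc_rep k A B.
Proof.
move=> le_k_B closedA.
have [b0 b0B | B0] := pickP (mem B); last first.
  by move: le_k_B; rewrite (eq_card0 B0) leqn0 => /eqP ->.
rewrite card_sum_in -(sum_addr_shift (- b0)%R) big_distrr /=; apply: leq_sum => x _.
case xA: (x - b0 \in A)%R; rewrite ?muln0 // muln1 leq_min leqnn (leq_trans le_k_B) //.
rewrite card_sum_in /nrep -[X in _ <= X](sum_subr_reflect x); apply: leq_sum => b _.
rewrite subKr; case bB: (b \in B) => //.
by have := closedA _ _ _ xA bB b0B; rewrite addrA subrK => ->.
Qed.

End SumsetCounting.

Lemma Fp_translate_closed_setT p (A : {set 'F_p}) (d : 'F_p) :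
  d != 0%R -> A != set0 -> (forall a, a \in A -> (a + d)%R \in A) -> A = setT.
Proof.
move=> d_neq0 /set0Pn [a0 a0A] closed_d; apply/setP => y; rewrite inE.
have multiples n : (a0 + d *+ n)%R \in A.
  by elim: n => [|n IHn]; rewrite ?mulr0n ?addr0 // mulrSr addrA closed_d.
have -> : y = (a0 + d *+ ((y - a0) / d)%R)%R.
  by rewrite -mulr_natr natr_Zp mulrC divfK // addrC subrK.
exact: multiples.
Qed.

Lemma mul_subn_split m k s : m <= k -> k + m <= s ->
  k * (s - k) = m * (s - m) + (k - m) * (s - m - k).
Proof.
move=> le_m_k le_s; have [w ?] : exists w, k = m + w by exists (k - m); lia.
have [v ?] : exists v, s = m + w + m + v by exists (s - (m + w + m)); lia.
subst k s.
rewrite addKn (_ : m + w + m + v - (m + w) = m + v); last by lia.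
rewrite (_ : m + w + m + v - m = m + w + v); last by lia.
by rewrite (_ : m + w + v - (m + w) = v); [ring | lia].
Qed.

Section Pollard.
Variable G : finZmodType.
Implicit Types (A B : {set G}) (e : G).
(* Every nonzero element generates G, as in Z/pZ. *)
Hypothesis translate_closed_setT : forall A (d : G), d != 0%R -> A != set0 ->
  (forall a, a \in A -> (a + d)%R \in A) -> A = setT.

Lemma pollard_diff_closed k A B : k <= #|A| -> k <= #|B| ->
  (forall a b b', a \in A -> b \in B -> b' \in B -> (a + (b' - b))%R \in A) ->
  k * minn #|G| (#|A| + #|B| - k) <= trunc_rep k A B.
Proof.
move=> kA kB closedA; apply: leq_trans (trunc_rep_diff_closed kB closedA).
rewrite leq_mul2l; have [-> // | k_gt0] := posnP k.
have [le_B_1 | /card_gt1P [b [b' [bB b'B b_neq_b']]]] := leqP #|B| 1; first lia.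
have -> : A = setT.
  apply: (translate_closed_setT (d := (b' - b)%R)) => [||a aA]; last exact: closedA.
    by rewrite subr_eq0 eq_sym.
  by rewrite -card_gt0; lia.
by rewrite cardsT geq_minl.
Qed.

Theorem pollard k A B : k <= #|A| -> k <= #|B| ->
  k * minn #|G| (#|A| + #|B| - k) <= trunc_rep k A B.
Proof.
have [n] := ubnP #|B|; elim: n => // n IH in k A B *; rewrite ltnS => le_B_n kA kB.
have [/existsP [e /andP [transB_gt0 resB_gt0]] | no_split] :=
  boolP [exists e, (0 < #|etransB e A B|) && (0 < #|eresB e A B|)]; last first.
  apply: pollard_diff_closed => // a b b' aA bB b'B.
  move: no_split; rewrite negb_exists => /forallP/(_ (a - b)%R).
  have -> : 0 < #|etransB (a - b)%R A B|.
    by apply/card_gt0P; exists b; rewrite !inE bB addrC subrK.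
  rewrite /= lt0n negbK cards_eq0 => /eqP/setP/(_ b').
  by rewrite !inE b'B /= addrCA addrA => /negbFE.
have cardT := card_etrans e A B; have cardRA := card_eresA e A B.
have cardRB := card_eresB e A B.
have [le_k_m | lt_m_k] := leqP k #|etransB e A B|.
  apply: leq_trans (trunc_rep_etrans_le k e A B); rewrite -cardT.
  by apply: IH; lia.
apply: leq_trans (trunc_rep_etrans_split (ltnW lt_m_k)).
set m := #|etransB e A B| in transB_gt0 lt_m_k cardT cardRA cardRB *.
have cA_le_G : #|etransA e A B| <= #|G| by apply: max_card.
have IHres : (k - m) * (#|etransA e A B| - k)
             <= trunc_rep (k - m) (eresA e A B) (eresB e A B).
  rewrite (_ : #|etransA e A B| - k
               = minn #|G| (#|eresA e A B| + #|eresB e A B| - (k - m))); last by lia.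
  by apply: IH; lia.
rewrite (_ : minn _ _ = #|etransA e A B| + m - k) ?(mul_subn_split (ltnW lt_m_k)); [|lia|lia].
by rewrite addnK leq_add2l.
Qed.

Lemma nsum_in_pollard k A B C : k <= #|A| -> k <= #|B| -> #|A| + #|B| - k <= #|G| ->
  nsum_in A B C + k * (#|A| + #|B| - k) <= #|A| * #|B| + k * #|C|.
Proof.
move=> kA kB le_G; have := pollard kA kB; rewrite (minn_idPr le_G) => le_trunc.
exact: leq_trans (leq_add (leqnn _) le_trunc) (nsum_in_trunc_rep k A B C).
Qed.

End Pollard.

Definition extremal_count (q l : nat) : nat :=
  let k := maxn l./2 (2 * l - q) in l * l - k * (l - k).

Lemma nsum_in_le_extremal q l (T1 T2 T3 : {set 'F_q}) : prime q -> l <= q ->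
  #|T1| = l -> #|T2| = l -> #|T3| = l -> nsum_in T1 T2 T3 <= extremal_count q l.
Proof.
move=> q_pr le_l_q cardT1 cardT2 cardT3; rewrite /extremal_count.
have half_l := odd_double_half l.
have k_le_l : maxn l./2 (2 * l - q) <= l by rewrite geq_max; lia.
have le_q : l + l - maxn l./2 (2 * l - q) <= q by have := leq_maxr l./2 (2 * l - q); lia.
have := nsum_in_pollard (@Fp_translate_closed_setT q) (k := maxn l./2 (2 * l - q))
  (A := T1) (B := T2) T3.
rewrite cardT1 cardT2 cardT3 card_Fp // => /(_ k_le_l k_le_l le_q).
rewrite (_ : l + l - _ = l + (l - maxn l./2 (2 * l - q))); last by lia.
by rewrite mulnDr; move: (_ * l) (_ * (l - _)) (l * l) => a b c; lia.
Qed.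

Lemma sum_nat_in_range n a b : \sum_(0 <= i < n) (a <= i < b) = minn n b - a.
Proof.
elim: n => [|n IHn]; first by rewrite big_geq //; lia.
by rewrite big_nat_recr //= IHn; case: (leqP a n); case: (ltnP n b); lia.
Qed.

Lemma sum_window_row l h i : i < l -> h <= l ->
  \sum_(0 <= j < l) (h <= i + j < h + l) = l - ((h - i) + (i - h)).
Proof.
move=> lt_i_l le_h_l.
rewrite (eq_big_nat _ _ (F2 := fun j => (h - i <= j < h + l - i) : nat)).
  by rewrite sum_nat_in_range; lia.
by move=> j _; congr (nat_of_bool _); apply/idP/idP => /andP [? ?]; apply/andP; split; lia.
Qed.

Lemma sum_distn h m :
  2 * \sum_(0 <= i < h + m) ((h - i) + (i - h)) = h * h.+1 + m * m.-1.
Proof.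
elim: m => [|m IHm].
  rewrite addn0 muln0 addn0; elim: h => [|h IHh]; first by rewrite big_geq.
  rewrite big_nat_recl // -[X in _ = X]/(h.+1 * h.+2).
  rewrite (eq_big_nat _ _ (F2 := fun i => (h - i) + (i - h))); first by lia.
  by move=> i /andP [_ lt_i_h]; lia.
rewrite addnS big_nat_recr //= mulnDr IHm (_ : h - (h + m) + (h + m - h) = m); last by lia.
by case: m {IHm} => [|m] /=; lia.
Qed.

Lemma window_count l :
  \sum_(0 <= i < l) \sum_(0 <= j < l) (l./2 <= i + j < l./2 + l) = l * l - l./2 * (l - l./2).
Proof.
have half_l := odd_double_half l; have le_h_l : l./2 <= l by lia.
rewrite (eq_big_nat _ _ (F2 := fun i => l - ((l./2 - i) + (i - l./2)))); last first.
  by move=> i /andP [_ lt_i_l]; rewrite sum_window_row.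
have dist := sum_distn l./2 (l - l./2); rewrite subnKC // in dist.
rewrite -[X in X = _](@addnK (\sum_(0 <= i < l) ((l./2 - i) + (i - l./2)))) -big_split /=.
rewrite (eq_big_nat _ _ (F2 := fun=> l)); last by move=> i /andP [_ lt_i_l]; lia.
rewrite sum_nat_const_nat subn0.
move: dist; move: (\sum_(_ <= _ < _) _) => D.
by case: (odd l) half_l => /= <-; nia.
Qed.

Lemma sum_widen_indicator m n (F : nat -> nat) : m <= n ->
  \sum_(0 <= i < n) (i < m) * F i = \sum_(0 <= i < m) F i.
Proof.
move=> le_m_n; rewrite (big_nat_widen _ _ _ _ _ le_m_n) [RHS]big_mkcond.
by apply: eq_bigr => i _; case: (i < m); rewrite ?mul1n.
Qed.

Section FpIntervals.
Variable p : nat.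
Hypothesis p_pr : prime p.

Definition Fp_interval a b : {set 'F_p} := [set x : 'F_p | a <= x < b].

Lemma sum_Fp_val (F : nat -> nat) : \sum_(x : 'F_p) F x = \sum_(0 <= i < p) F i.
Proof. by rewrite -[in RHS](Fp_cast p_pr) big_mkord. Qed.

Lemma card_Fp_interval a b : b <= p -> #|Fp_interval a b| = b - a.
Proof.
move=> le_b_p; rewrite card_sum_in.
under eq_bigr do rewrite inE.
by rewrite (sum_Fp_val (fun i => a <= i < b)) sum_nat_in_range; lia.
Qed.

Lemma card_Fp_intervalC a b : b <= p -> #|~: Fp_interval a b| = p - (b - a).
Proof.
by move=> le_b_p; have := cardsC (Fp_interval a b); rewrite card_Fp_interval // card_Fp //; lia.
Qed.

Lemma nsum_in_window l : l + l./2 <= p ->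
  l * l - l./2 * (l - l./2)
  <= nsum_in (Fp_interval 0 l) (Fp_interval 0 l) (Fp_interval l./2 (l./2 + l)).
Proof.
move=> le_p; have le_l_p : l <= p by lia.
rewrite -window_count -(sum_widen_indicator _ le_l_p).
under eq_bigr do rewrite -(sum_widen_indicator _ le_l_p) big_distrr /=.
rewrite -sum_Fp_val; apply: leq_sum => a _; rewrite -sum_Fp_val; apply: leq_sum => b _.
rewrite !inE /=; case: (ltnP a l) => // lt_a_l; case: (ltnP b l) => // lt_b_l.
rewrite [X in _ %% X](Fp_cast p_pr) !mul1n.
case: (boolP (_ <= a + b < _)) => //= /andP [? ?]; rewrite modn_small; lia.
Qed.

Lemma nsum_in_interval_compl u : 3 * u <= p.+1 ->
  nsum_in (~: Fp_interval 0 u) (~: Fp_interval 0 u) (~: Fp_interval (2 * u - 1) (3 * u - 1))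
  = p * p - 3 * (p - u) * u.
Proof.
move=> le_p; set I := Fp_interval 0 u; set C := Fp_interval (2 * u - 1) (3 * u - 1).
have cardI : #|I| = u by rewrite card_Fp_interval; lia.
have cardIC : #|~: I| = p - u by rewrite card_Fp_intervalC; lia.
have cardCC : #|~: C| = p - u by rewrite card_Fp_intervalC; lia.
have sum_small : nsum_in I I C = 0.
  apply/eqP; rewrite sum_nat_eq0; apply/forallP => a; rewrite sum_nat_eq0.
  apply/forallP => b; rewrite !inE /= [X in _ %% X](Fp_cast p_pr).
  by case: (ltnP a u) => //= lt_a_u; case: (ltnP b u) => //= lt_b_u; rewrite modn_small; lia.
have splitC : nsum_in I I C + nsum_in I I (~: C) = #|I| * #|I| := nsum_in_setCr I I C.
have splitB : nsum_in I I (~: C) + nsum_in I (~: I) (~: C) = #|I| * #|~: C|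
  := nsum_in_setCm I I (~: C).
have splitA : nsum_in I (~: I) (~: C) + nsum_in (~: I) (~: I) (~: C) = #|~: I| * #|~: C|
  := nsum_in_setCl I (~: I) (~: C).
move: splitA splitB splitC; rewrite sum_small cardI cardIC cardCC.
move: (nsum_in I I (~: C)) (nsum_in I (~: I) (~: C)) (nsum_in (~: I) _ _) => X Y W.
have [l ->] : exists l, p = l + u by exists (p - u); lia.
rewrite addnK; nia.
Qed.

End FpIntervals.

Lemma extremal_count_small q l : 3 * l <= 2 * q -> 4 * extremal_count q l = 3 * l * l + odd l.
Proof.
move=> small; have half_l := odd_double_half l.
rewrite /extremal_count (maxn_idPl _); last by lia.
move: half_l; case: (odd l) => /= <-; rewrite ?add0n ?addnK ?addKn; nia.
Qed.

Lemma extremal_count_large q l : l <= q -> 2 * q < 3 * l ->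
  extremal_count q l = q * q - 3 * l * (q - l).
Proof.
move=> le_l_q large; rewrite /extremal_count (maxn_idPr _); last by lia.
have [u def_q] : exists u, q = l + u by exists (q - l); lia.
have [w def_l] : exists w, l = u + w by exists (l - u); lia.
rewrite def_q addKn def_l (_ : 2 * (u + w) - (u + w + u) = w); last by lia.
rewrite addnK (_ : (u + w + u) * _ = u * u + u * w + w * w + 3 * (u + w) * u); last by ring.
by rewrite (_ : (u + w) * _ = u * u + u * w + w * w + w * u) ?addnK //; ring.
Qed.

Lemma extremal_sets q l : prime q -> l <= q ->
  exists T1 T2 T3 : {set 'F_q},
    [/\ #|T1| = l, #|T2| = l, #|T3| = l & nsum_in T1 T2 T3 = extremal_count q l].
Proof.
move=> q_pr le_l_q; have half_l := odd_double_half l.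
have [small | large] := leqP (3 * l) (2 * q).
  exists (Fp_interval q 0 l), (Fp_interval q 0 l), (Fp_interval q l./2 (l./2 + l)).
  have card_T : #|Fp_interval q 0 l| = l by rewrite card_Fp_interval //; lia.
  have card_T3 : #|Fp_interval q l./2 (l./2 + l)| = l by rewrite card_Fp_interval //; lia.
  split=> //; apply/eqP; rewrite eqn_leq nsum_in_le_extremal //=.
  rewrite /extremal_count (maxn_idPl _); last by lia.
  by apply: nsum_in_window => //; lia.
exists (~: Fp_interval q 0 (q - l)), (~: Fp_interval q 0 (q - l)).
exists (~: Fp_interval q (2 * (q - l) - 1) (3 * (q - l) - 1)).
rewrite !card_Fp_intervalC ?nsum_in_interval_compl ?extremal_count_large //; try lia.
by rewrite subn0 subKn //; split=> //; lia.
Qed.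

Local Open Scope ring_scope.

Lemma prob_sum_inE q (T1 T2 T3 : {set 'F_q}) :
  prob_sum_in T1 T2 T3 = (nsum_in T1 T2 T3)%:R / (#|T1| * #|T2|)%:R.
Proof. by rewrite /prob_sum_in card_pairs_sum_in. Qed.

Lemma sum_bound_small q l : (3 * l <= 2 * q)%N ->
  sum_bound q l = if odd l then 3 / 4 + 1 / (4 * l%:R ^+ 2) else 3 / 4.
Proof.
move=> small; have {}small : 3 * l%:R <= 2 * q%:R :> rat by rewrite -!natrM ler_nat.
rewrite /sum_bound !max_l; try lra.
by case: (odd l); rewrite ?mul0r ?expr0n /= ?mul0r ?addr0.
Qed.

Lemma sum_bound_large q l : (0 < l)%N -> (2 * q < 3 * l)%N ->
  sum_bound q l = (q%:R ^+ 2 - 3 * l%:R * (q%:R - l%:R)) / l%:R ^+ 2.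
Proof.
move=> l_gt0 large; have l_neq0 : l%:R != 0 :> rat by rewrite pnatr_eq0 -lt0n.
have {}large : 2 * q%:R + 1 <= 3 * l%:R :> rat by rewrite -!natrM natr1 ler_nat.
by rewrite /sum_bound !max_r; [case: (odd l); field | lra | lra].
Qed.

Lemma sum_bound_extremal q l : (0 < l)%N -> (l <= q)%N ->
  sum_bound q l = (extremal_count q l)%:R / (l * l)%:R.
Proof.
move=> l_gt0 le_l_q; have l_neq0 : l%:R != 0 :> rat by rewrite pnatr_eq0 -lt0n.
have [small | large] := leqP (3 * l) (2 * q).
  rewrite sum_bound_small // -[(extremal_count q l)%:R](@mulKf _ 4) // -natrM.
  by rewrite extremal_count_small // natrD !natrM; case: (odd l) => /=; field.
have le_3 : (3 * l * (q - l) <= q * q)%N by nia.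
by rewrite sum_bound_large // extremal_count_large // natrB // !natrM natrB.
Qed.

Unset Implicit Arguments.
Set Strict Implicit.
Theorem lemma3p2 (q l : nat) :
  prime q -> (3 <= q)%N -> (0 < l)%N -> (l <= q)%N ->
  (* main bound *)
  (forall T1 T2 T3 : {set 'F_q}, #|T1| = l -> #|T2| = l -> #|T3| = l ->
     prob_sum_in T1 T2 T3 <= sum_bound q l)
  (* tightness *)
  /\ (exists T1 T2 T3 : {set 'F_q}, [/\ #|T1| = l, #|T2| = l, #|T3| = l &
        prob_sum_in T1 T2 T3 = sum_bound q l])
  (* consequence (1) *)
  /\ ((3 * l <= 2 * q)%N ->
      forall T1 T2 T3 : {set 'F_q}, #|T1| = l -> #|T2| = l -> #|T3| = l ->
        prob_sum_in T1 T2 T3 <=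
          (if odd l then 3 / 4 + 1 / (4 * l%:R ^+ 2) else 3 / 4))
  (* consequence (2) *)
  /\ ((2 * q < 3 * l)%N -> (l <= q - 1)%N ->
      forall T1 T2 T3 : {set 'F_q}, #|T1| = l -> #|T2| = l -> #|T3| = l ->
        prob_sum_in T1 T2 T3 <=
          (q%:R ^+ 2 - 3 * l%:R * (q%:R - l%:R)) / l%:R ^+ 2).
Proof.
move=> q_pr _ l_gt0 le_l_q.
have bound (T1 T2 T3 : {set 'F_q}) : #|T1| = l -> #|T2| = l -> #|T3| = l ->
    prob_sum_in T1 T2 T3 <= sum_bound q l.
  move=> cardT1 cardT2 cardT3; rewrite prob_sum_inE cardT1 cardT2 sum_bound_extremal //.
  by rewrite ler_pM2r ?invr_gt0 ?ltr0n ?muln_gt0 ?l_gt0 // ler_nat nsum_in_le_extremal.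
split; first exact: bound.
split.
  have [T1 [T2 [T3 [cardT1 cardT2 cardT3 extremal]]]] := extremal_sets q_pr le_l_q.
  exists T1, T2, T3; split=> //.
  by rewrite prob_sum_inE cardT1 cardT2 extremal sum_bound_extremal.
split=> [small | large _] T1 T2 T3 cardT1 cardT2 cardT3.
  by rewrite -(sum_bound_small small); exact: bound.
by rewrite -(sum_bound_large l_gt0 large); exact: bound.
Qed.
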